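(* Let $p(y;\vec{\eta})=h(y)\exp(\vec{\eta}^T\vec{T}(y)-A(\vec{\eta}))$ be an exponential family distribution with sufficient statistics vector $\vec{T}(y)=(T_1(y),\dots,T_L(y))^T$ of length $L\in\mathbb{N}$, and consider the general ef-MCA model of the context with parameters $\Theta$ containing $\vec{\pi}$ and $L$ matrices $W^{(1)},\dots,W^{(L)}\in\mathbb{R}^{D\times H}$, data $\vec{y}^{(1)},\dots,\vec{y}^{(N)}$ and distributions $q^{(1)},\dots,q^{(N)}$ on $\{0,1\}^H$. Then the derivatives of the lower bound $$\mathcal{F}(q,\Theta)=\sum_{n=1}^N\sum_{\vec{s}\in\{0,1\}^H}q^{(n)}(\vec{s})\Big\{\sum_{d=1}^D\log p\big(y_d^{(n)};\vec{\tilde{\eta}}_d(\vec{s},\Theta)\big)+\sum_{h=1}^H\log p(s_h\mid\Theta)\Big\}+\mathcal{H}(q)$$ with respect to all $W^{(l)}_{dh}$ are zero if for all $d$, $h$ and $l$ $$W^{(l)}_{dh}=\frac{\sum_{n=1}^N\langle\mathcal{A}_{dh}(\vec{s},\Theta)\rangle_{q^{(n)}}\,T_l(y_d^{(n)})}{\sum_{n=1}^N\langle\mathcal{A}_{dh}(\vec{s},\Theta)\rangle_{q^{(n)}}}.$$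
   Context: $A$ is assumed finite. Mean value parameters: $\vec{w}=\langle\vec{T}(y)\rangle_{p(y;\vec{\eta})}\in\mathbb{R}^L$ (expectation under $p(\cdot;\vec{\eta})$); this map is assumed invertible with inverse $\vec{\Phi}$, i.e. $\vec{w}=\langle\vec{T}(y)\rangle_{p(y;\vec{\Phi}(\vec{w}))}$. Let $F(\vec{w})=\langle y\rangle_{p(y;\vec{\Phi}(\vec{w}))}$ and $M_{dh}(\Theta)=F(W^{(1)}_{dh},\dots,W^{(L)}_{dh})$. For $\vec{s}\in\{0,1\}^H$: $h(d,\vec{s},\Theta)=\mathrm{argmax}_h\{M_{dh}(\Theta)s_h\}$, $\bar{W}^{(l)}_d(\vec{s},\Theta)=W^{(l)}_{d\,h(d,\vec{s},\Theta)}$, and $\vec{\tilde{\eta}}_d(\vec{s},\Theta)=\vec{\Phi}(\bar{W}^{(1)}_d(\vec{s},\Theta),\dots,\bar{W}^{(L)}_d(\vec{s},\Theta))$. The model is $p(\vec{s}\mid\Theta)=\prod_h\pi_h^{s_h}(1-\pi_h)^{1-s_h}$ and $p(\vec{y}\mid\vec{s},\Theta)=\prod_{d=1}^D p(y_d;\vec{\tilde{\eta}}_d(\vec{s},\Theta))$. $\mathcal{H}(q)$ is the Shannon entropy of the $q^{(n)}$. $\mathcal{A}_{dh}(\vec{s},\Theta)=1$ if $h=h(d,\vec{s},\Theta)$ and $0$ otherwise; $\langle\cdot\rangle_{q^{(n)}}$ is expectation over $\vec{s}\sim q^{(n)}$. When differentiating, $\partial\bar{W}^{(l)}_d/\partial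 W^{(l)}_{dh}=\mathcal{A}_{dh}$, $\partial\bar{W}^{(k)}_d/\partial W^{(l)}_{dh}=0$ for $k\neq l$, and the $q^{(n)}$ are held fixed. *)

From HB Require Import structures.
From mathcomp Require Import all_boot all_order all_algebra.
From mathcomp Require Import all_classical all_reals all_analysis.
Set Implicit Arguments. Unset Strict Implicit. Unset Printing Implicit Defensive.
Import Order.TTheory GRing.Theory Num.Theory.
Import numFieldNormedType.Exports.
Local Open Scope ring_scope.

Section EfMCA.
Variables (R : realType) (Y : finType) (L : nat).

(* Y : the finite value set A (a finite set of reals via yv);
   hb : base measure h(y); T : sufficient statistics T(y) as a row vector. *)
Variables (yv : Y -> R) (hb : Y -> R) (T : Y -> 'rV[R]_L).

Definition dotv (a b : 'rV[R]_L) : R := \sum_(k < L) a ord0 k * b ord0 k.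

Definition logA (eta : 'rV[R]_L) : R := ln (\sum_(y : Y) hb y * expR (dotv eta (T y))).

Definition pdf (y : Y) (eta : 'rV[R]_L) : R := hb y * expR (dotv eta (T y) - logA eta).

Definition meanmap (eta : 'rV[R]_L) : 'rV[R]_L := \sum_(y : Y) pdf y eta *: T y.

Variable Phi : 'rV[R]_L -> 'rV[R]_L.   (* inverse of meanmap *)

Definition Fmean (w : 'rV[R]_L) : R := \sum_(y : Y) pdf y (Phi w) * yv y.

Variables (D H N : nat).
Variables (pi : 'I_H -> R) (W : 'I_D -> 'I_H -> 'rV[R]_L).
(* W d h = (W^(1)_{dh}, ..., W^(L)_{dh}) *)

Definition Mdh (d : 'I_D) (h : 'I_H) : R := Fmean (W d h).

Definition sval (s : {ffun 'I_H -> bool}) (h : 'I_H) : R := (s h)%:R.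

(* h(d,s,Theta) = argmax_h { M_dh s_h } (ties broken by [pick]) *)
Definition hsel (d : 'I_D) (s : {ffun 'I_H -> bool}) : option 'I_H :=
  [pick h | [forall j, Mdh d j * sval s j <= Mdh d h * sval s h]].

Definition Aind (d : 'I_D) (h : 'I_H) (s : {ffun 'I_H -> bool}) : R :=
  (hsel d s == Some h)%:R.

Definition Wbar (d : 'I_D) (s : {ffun 'I_H -> bool}) : 'rV[R]_L :=
  match hsel d s with Some h => W d h | None => 0 end.

Variables (ys : 'I_N -> 'I_D -> Y) (q : 'I_N -> {ffun 'I_H -> bool} -> R).

Definition logprior (s : {ffun 'I_H -> bool}) (h : 'I_H) : R :=
  sval s h * ln (pi h) + (1 - sval s h) * ln (1 - pi h).

Definition entropy : R := - \sum_(n < N) \sum_(s : {ffun 'I_H -> bool}) q n s * ln (q n s).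

(* The free energy written as a function of the variables bar W_d(s)
   (one independent vector per s and d), with eta~_d(s) = Phi(bar W_d(s)). *)
Definition Fbar (Wb : {ffun 'I_H -> bool} -> 'I_D -> 'rV[R]_L) : R :=
  \sum_(n < N) \sum_(s : {ffun 'I_H -> bool})
     q n s * (\sum_(d < D) ln (pdf (ys n d) (Phi (Wb s d)))
              + \sum_(h < H) logprior s h)
  + entropy.

Definition Fbound : R := Fbar (fun s d => Wbar d s).

Definition evec (l : 'I_L) : 'rV[R]_L := \row_(k < L) (k == l)%:R.

(* Variation of F along W^(l)_{dh} with the convention of the paper:
   d bar W^(l)_{d'}(s) / d W^(l)_{dh} = [d' = d] A_dh(s), the other
   components of bar W are unaffected, and q is held fixed.  The derivative
   of F w.r.t. W^(l)_{dh} is the derivative of this function at t = 0. *)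
Definition Fpath (d : 'I_D) (h : 'I_H) (l : 'I_L) (t : R) : R :=
  Fbar (fun s d' => Wbar d' s + (t * (d' == d)%:R * Aind d h s) *: evec l).

Definition EA (n : 'I_N) (d : 'I_D) (h : 'I_H) : R :=
  \sum_(s : {ffun 'I_H -> bool}) q n s * Aind d h s.

End EfMCA.

(* Perturbing W^(l)_{dh} only moves the natural parameters Phi (bar W_d(s)) of
   the states s whose selected cause for d is h, and it moves them along
   t |-> Phi (W_dh + t e_l).  In an exponential family the derivative of
   log p(y; eta) along a path eta(t) is (T(y) - <T>_{eta}) . eta', because the
   gradient of the log-partition function is the mean <T>; at Phi (W_dh) that
   mean is W_dh itself.  So dF/dW^(l)_{dh} is eta' contracted with
   sum_n <A_dh>_{q^(n)} (T(y_d^(n)) - W_dh), which vanishes precisely because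
   W_dh is the <A_dh>-weighted mean of the T(y_d^(n)). *)

From Pilot Require Import Defs.
From HB Require Import structures.
From mathcomp Require Import all_boot all_order all_algebra.
From mathcomp Require Import all_classical all_reals all_analysis.
Import Order.TTheory GRing.Theory Num.Theory.
Import numFieldNormedType.Exports.
Set Implicit Arguments. Unset Strict Implicit. Unset Printing Implicit Defensive.
Local Open Scope ring_scope.

Lemma is_derive_sumf (R : numFieldType) (V W : normedModType R) (I : finType)
    (f : I -> V -> W) (df : I -> W) (x v : V) :
  (forall i, is_derive x v (f i) (df i)) ->
  is_derive x v (fun t => \sum_i f i t) (\sum_i df i).
Proof.
move=> f_df; have -> : (fun t => \sum_i f i t) = \sum_i f i.
  by apply/funext => t; rewrite fct_sumE.
by elim/big_ind2 : _ => // *; [exact: is_derive_cst | exact: is_deriveD].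
Qed.

Lemma derivable_coord_line (R : realType) (V : normedModType R) (m : nat)
    (f : V -> 'rV[R]_m) (w v : V) (k : 'I_m) :
  differentiable f w -> derivable (fun t : R => f (w + t *: v) ord0 k) 0 1.
Proof.
move=> df; apply/derivable1_diffP.
apply: (@differentiable_comp _ _ _ _ _ (fun M : 'rV[R]_m => M ord0 k)); last first.
  exact: differentiable_coord.
apply: differentiable_comp.
  by apply: differentiableD => //; exact: differentiableZl.
by rewrite /= scale0r addr0.
Qed.

(* Also holds when the weights sum to 0: the junk value x / 0 = 0 is harmless
   since then every weight vanishes. *)
Lemma sum_weighted_dev_mean_eq0 (F : numFieldType) (I : finType) (a b : I -> F) :
  (forall i, 0 <= a i) ->
  \sum_i a i * (b i - (\sum_j a j * b j) / \sum_j a j) = 0.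
Proof.
move=> a_ge0; have [a0 | a_neq0] := eqVneq (\sum_j a j) 0.
  by rewrite big1 // => i _; rewrite (psumr_eq0P (fun j _ => a_ge0 j) a0) ?mul0r.
under eq_bigr do rewrite mulrBr.
by rewrite sumrB -mulr_suml mulrC divfK // subrr.
Qed.

Section ExponentialFamily.
Variables (R : realType) (Y : finType) (L : nat) (hb : Y -> R) (T : Y -> 'rV[R]_L).

Lemma dotvC (a b : 'rV[R]_L) : dotv a b = dotv b a.
Proof. by rewrite /dotv; apply: eq_bigr => k _; rewrite mulrC. Qed.

Lemma dotvE (a b : 'rV[R]_L) : dotv a b = (a *m b^T) ord0 ord0.
Proof. by rewrite mxE; apply: eq_bigr => k _; rewrite mxE. Qed.

Lemma dotv0l (b : 'rV[R]_L) : dotv 0 b = 0.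
Proof. by rewrite dotvE mul0mx mxE. Qed.

Lemma dotvBl (a a' b : 'rV[R]_L) : dotv (a - a') b = dotv a b - dotv a' b.
Proof. by rewrite !dotvE mulmxBl !mxE. Qed.

Lemma dotv_sumZl (I : Type) (r : seq I) (c : I -> R) (a : I -> 'rV[R]_L)
    (b : 'rV[R]_L) :
  dotv (\sum_(i <- r) c i *: a i) b = \sum_(i <- r) c i * dotv (a i) b.
Proof.
rewrite dotvE mulmx_suml summxE; apply: eq_bigr => i _.
by rewrite -scalemxAl mxE dotvE.
Qed.

Lemma is_derive_dotv (b : 'rV[R]_L) (g : R -> 'rV[R]_L) (dg : 'rV[R]_L) (x : R) :
  (forall k, is_derive x 1 (fun t => g t ord0 k) (dg ord0 k)) ->
  is_derive x 1 (fun t => dotv b (g t)) (dotv b dg).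
Proof. by move=> g_dg; apply: is_derive_sumf => k; exact: is_deriveZ. Qed.

Hypothesis hb_gt0 : forall y, 0 < hb y.

Lemma partition_gt0 (y0 : Y) (eta : 'rV[R]_L) :
  0 < \sum_y hb y * expR (dotv eta (T y)).
Proof.
rewrite (bigD1 y0) //= ltr_wpDr ?mulr_gt0 ?expR_gt0 //.
by apply: sumr_ge0 => y _; rewrite mulr_ge0 ?expR_ge0 ?ltW.
Qed.

Lemma is_derive_logA (g : R -> 'rV[R]_L) (dg : 'rV[R]_L) (x : R) :
  (forall k, is_derive x 1 (fun t => g t ord0 k) (dg ord0 k)) ->
  is_derive x 1 (fun t => logA hb T (g t)) (dotv (meanmap hb T (g x)) dg).
Proof.
move=> g_dg; have [y0 _ | Y0] := pickP (@predT Y); last first.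
  have -> : (fun t => logA hb T (g t)) = cst (ln 0).
    by apply/funext => t; rewrite /logA big_pred0.
  by rewrite /meanmap big_pred0 // dotv0l; exact: is_derive_cst.
pose Z t := \sum_y hb y * expR (dotv (g t) (T y)).
have dZ : is_derive x 1 Z (\sum_y hb y * (expR (dotv (g x) (T y)) * dotv (T y) dg)).
  apply: is_derive_sumf => y.
  have d_dotv : is_derive x 1 (fun t => dotv (g t) (T y)) (dotv (T y) dg).
    by under eq_fun do rewrite dotvC; exact: is_derive_dotv.
  exact: is_deriveZ (is_derive1_comp (is_derive_expR _) d_dotv).
apply: is_derive_eq (is_derive1_comp (is_derive1_ln (partition_gt0 y0 (g x))) dZ) _.
rewrite /meanmap dotv_sumZl mulr_sumr; apply: eq_bigr => y _.
rewrite /pdf /logA expRD expRN lnK ?posrE ?(partition_gt0 y0) //.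
by rewrite mulrCA !mulrA (mulrAC (hb y)).
Qed.

Lemma ln_pdfE (y : Y) (eta : 'rV[R]_L) :
  ln (pdf hb T y eta) = ln (hb y) + dotv eta (T y) - logA hb T eta.
Proof. by rewrite /pdf lnM ?posrE ?expR_gt0 // expRK addrA. Qed.

Lemma is_derive_ln_pdf (y : Y) (g : R -> 'rV[R]_L) (dg : 'rV[R]_L) (x : R) :
  (forall k, is_derive x 1 (fun t => g t ord0 k) (dg ord0 k)) ->
  is_derive x 1 (fun t => ln (pdf hb T y (g t))) (dotv (T y - meanmap hb T (g x)) dg).
Proof.
move=> g_dg; under eq_fun do rewrite ln_pdfE dotvC.
rewrite dotvBl -[dotv (T y) dg]add0r.
exact: is_deriveB (is_deriveD (is_derive_cst _ _ _) (is_derive_dotv (T y) g_dg))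
  (is_derive_logA g_dg).
Qed.

End ExponentialFamily.

Section EfMCAModel.
Variables (R : realType) (Y : finType) (L : nat) (yv hb : Y -> R) (T : Y -> 'rV[R]_L)
  (Phi : 'rV[R]_L -> 'rV[R]_L) (D H N : nat) (pi : 'I_H -> R)
  (W : 'I_D -> 'I_H -> 'rV[R]_L) (ys : 'I_N -> 'I_D -> Y)
  (q : 'I_N -> {ffun 'I_H -> bool} -> R).

Local Notation hsel := (hsel yv hb T Phi W).
Local Notation Wbar := (Wbar yv hb T Phi W).
Local Notation Aind := (Aind yv hb T Phi W).
Local Notation EA := (EA yv hb T Phi W q).
Local Notation evec := (@evec R L).

Lemma Wbar_shift (d d' : 'I_D) (h : 'I_H) (l : 'I_L) (s : {ffun 'I_H -> bool})
    (t : R) :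
  Wbar d' s + (t * (d' == d)%:R * Aind d h s) *: evec l =
  if (d' == d) && (hsel d s == Some h) then W d h + t *: evec l else Wbar d' s.
Proof.
rewrite /Defs.Aind /Defs.Wbar.
case: eqP => [-> | _]; last by rewrite mulr0 mul0r scale0r addr0.
by case: eqP => [-> | _]; rewrite ?mulr1 // mulr0 scale0r addr0.
Qed.

Hypothesis hb_gt0 : forall y, 0 < hb y.

Lemma is_derive_ln_pdf_shift (n : 'I_N) (s : {ffun 'I_H -> bool}) (d d' : 'I_D)
    (h : 'I_H) (l : 'I_L) (dg : 'rV[R]_L) :
  (forall k : 'I_L,
     is_derive (0 : R) 1 (fun t : R => Phi (W d h + t *: evec l) ord0 k) (dg ord0 k)) ->
  is_derive (0 : R) 1
    (fun t : R => ln (pdf hb T (ys n d')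
                    (Phi (Wbar d' s + (t * (d' == d)%:R * Aind d h s) *: evec l))))
    ((d' == d)%:R * Aind d h s * dotv (T (ys n d) - meanmap hb T (Phi (W d h))) dg).
Proof.
move=> Phi_dg; under eq_fun do rewrite Wbar_shift.
rewrite /Defs.Aind; case: eqP => [-> | _] /=; last by rewrite !mul0r; exact: is_derive_cst.
case: eqP => _ /=; last by rewrite mulr0 mul0r; exact: is_derive_cst.
by rewrite !mul1r; have := is_derive_ln_pdf T hb_gt0 (ys n d) Phi_dg; rewrite scale0r addr0.
Qed.

Lemma is_derive_Fpath (d : 'I_D) (h : 'I_H) (l : 'I_L) (dg : 'rV[R]_L) :
  (forall k : 'I_L,
     is_derive (0 : R) 1 (fun t : R => Phi (W d h + t *: evec l) ord0 k) (dg ord0 k)) ->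
  is_derive (0 : R) 1 (Fpath yv hb T Phi pi W ys q d h l)
    (\sum_n EA n d h * dotv (T (ys n d) - meanmap hb T (Phi (W d h))) dg).
Proof.
move=> Phi_dg.
have dF := is_deriveD (is_derive_sumf (fun n => is_derive_sumf (fun s =>
  is_deriveZ (q n s) (is_deriveD
    (is_derive_sumf (fun d' => is_derive_ln_pdf_shift n s d' Phi_dg))
    (is_derive_cst (\sum_h' logprior pi s h') (0 : R) 1)))))
  (is_derive_cst (entropy q) (0 : R) 1).
rewrite /Fpath /Fbar; apply: is_derive_eq dF _.
rewrite addr0; apply: eq_bigr => n _.
rewrite /Defs.EA mulr_suml; apply: eq_bigr => s _.
rewrite addr0 (bigD1 d) //= big1 => [|d' /negbTE ->]; last by rewrite !mul0r.
by rewrite eqxx mul1r addr0; exact: mulrA.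
Qed.

Lemma EA_ge0 (n : 'I_N) (d : 'I_D) (h : 'I_H) :
  (forall s, 0 <= q n s) -> 0 <= EA n d h.
Proof. by move=> q_ge0; apply: sumr_ge0 => s _; rewrite mulr_ge0 ?ler0n. Qed.

End EfMCAModel.

Theorem theorem2 (R : realType) (Y : finType) (L : nat)
  (yv : Y -> R) (hb : Y -> R) (T : Y -> 'rV[R]_L)
  (Phi : 'rV[R]_L -> 'rV[R]_L)
  (D H N : nat) (pi : 'I_H -> R) (W : 'I_D -> 'I_H -> 'rV[R]_L)
  (ys : 'I_N -> 'I_D -> Y) (q : 'I_N -> {ffun 'I_H -> bool} -> R) :
  injective yv ->
  (forall y, 0 < hb y) ->
  (* Phi is the inverse of the mean value map *)
  (forall eta, Phi (meanmap hb T eta) = eta) ->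
  (forall w, w \in range (meanmap hb T) -> differentiable Phi w) ->
  (forall d h, W d h \in range (meanmap hb T)) ->
  (forall h, 0 < pi h < 1) ->
  (forall n s, 0 <= q n s) ->
  (forall n, \sum_(s : {ffun 'I_H -> bool}) q n s = 1) ->
  (forall d h l,
     W d h ord0 l =
       (\sum_(n < N) EA yv hb T Phi W q n d h * T (ys n d) ord0 l)
       / (\sum_(n < N) EA yv hb T Phi W q n d h)) ->
  forall d h l,
    is_derive (0 : R) 1
      (Fpath yv hb T Phi pi W ys q d h l) 0.
Proof.
(* Neither the prior, nor the normalisation of q, nor injectivity of yv enters. *)
move=> _ hb_gt0 PhiK Phi_diff W_range _ q_ge0 _ W_fix d h l.
have mean_Wdh : meanmap hb T (Phi (W d h)) = W d h.
  by move: (W_range d h); rewrite inE => -[eta _ <-]; rewrite PhiK.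
pose dg := \row_k 'D_1 (fun t : R => Phi (W d h + t *: @evec R L l) ord0 k) 0.
have Phi_dg k :
    is_derive (0 : R) 1 (fun t : R => Phi (W d h + t *: @evec R L l) ord0 k) (dg ord0 k).
  by rewrite mxE; apply/derivableP/derivable_coord_line/Phi_diff/W_range.
apply: is_derive_eq (is_derive_Fpath yv T pi ys q hb_gt0 Phi_dg) _.
rewrite mean_Wdh -dotv_sumZl.
suff -> : \sum_n EA yv hb T Phi W q n d h *: (T (ys n d) - W d h) = 0 by rewrite dotv0l.
apply/rowP => k; rewrite summxE mxE.
under eq_bigr do rewrite !mxE.
by rewrite W_fix sum_weighted_dev_mean_eq0 // => n; exact: EA_ge0.
Qed.
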